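(* Let $\lambda,\mu$ be partitions with $|\mu|=|\lambda|$ and $d(\lambda,\mu)=2$, and write $S_\lambda\setminus S_\mu=\{\lambda_a-a+\frac12,\lambda_b-b+\frac12\}$ and $S_\mu\setminus S_\lambda=\{\mu_{a'}-a'+\frac12,\mu_{b'}-b'+\frac12\}$ with $1\le a<b$ and $1\le a'<b'$. Then there exist exactly two pairs $(\gamma,\gamma')$ with $\gamma$ a border strip of $\lambda$, $\gamma'$ a border strip of $\mu$ and $\lambda\setminus\gamma=\mu\setminus\gamma'$; denoting them $(\gamma_1,\gamma_1')$ and $(\gamma_2,\gamma_2')$ suitably, they satisfy: (i) $\gamma_1\subset\gamma_2$ and $\gamma_1'\subset\gamma_2'$; (ii) $|\gamma_1|=|\gamma_1'|=|\lambda_a-a-\mu_{a'}+a'|$ and $|\gamma_2|=|\gamma_2'|=|\lambda_a-a-\mu_{b'}+b'|$; (iii) if $\lambda_a-a>\mu_{a'}-a'$, then $\mathrm{ht}(\gamma_1)=a'-a$, $\mathrm{ht}(\gamma_1')=b-b'$, $\mathrm{ht}(\gamma_2)=b'-a-1$, $\mathrm{ht}(\gamma_2')=b-a'$; and if $\lambda_a-a<\mu_{a'}-a'$, then $\mathrm{ht}(\gamma_1)=b'-b$, $\mathrm{ht}(\gamma_1')=a-a'$, $\mathrm{ht}(\gamma_2)=b'-a$, $\mathrm{ht}(\gamma_2')=b-a'-1$.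
   Context: Partitions $\lambda=(\lambda_1\ge\lambda_2\ge\dots)$, with $\lambda_j=0$ beyond the length; $|\lambda|$ is the size, $\lambda'$ the transpose; $S_\lambda=\{\lambda_j-j+\frac12:j\ge1\}$. Modified Frobenius coordinates: if $d$ is the number of $i$ with $\lambda_i\ge i$, $c_i=\lambda_i-i+\frac12$, $c_i^*=-(\lambda'_i-i)-\frac12$, $C_\lambda=\{c_1,\dots,c_d,c_1^*,\dots,c_d^*\}$; Hamming distance $d(\lambda,\mu)=\frac12|C_\lambda\,\Delta\,C_\mu|$ (when $d(\lambda,\mu)=2$ one has $|S_\lambda\setminus S_\mu|=|S_\mu\setminus S_\lambda|=2$, so the indices $a,b,a',b'$ exist). Young diagram $Y_\lambda=\{(x,y):1\le y\le\lambda_x\}$. For partitions $\sigma$ with $Y_\sigma\subset Y_\lambda$, the skew diagram $\gamma=\lambda/\sigma$ is a border strip of $\lambda$ if it is edge-connected and contains no $2\times2$ block; then $\lambda\setminus\gamma:=\sigma$, $|\gamma|$ is the number of cells and $\mathrm{ht}(\gamma)$ is the number of rows it meets minus one. Inclusion $\gamma_1\subset\gamma_2$ is inclusion of sets of cells. *)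

From HB Require Import structures.
From mathcomp Require Import all_boot all_order all_algebra.
From mathcomp Require Import finmap.
Set Implicit Arguments. Unset Strict Implicit. Unset Printing Implicit Defensive.
Import Order.TTheory GRing.Theory Num.Theory.
Local Open Scope fset_scope.
Local Open Scope ring_scope.

Definition is_partition (s : seq nat) : bool :=
  sorted (fun x y => y <= x)%N s && all (fun x => 0 < x)%N s.

(* lambda_j for j >= 1 (1-indexed); 0 beyond the length. *)
Definition part (s : seq nat) (j : nat) : nat := nth 0 s j.-1.

Definition psize (s : seq nat) : nat := sumn s.

Definition ptrans (s : seq nat) (i : nat) : nat := count (fun x => i <= x)%N s.

Definition inS (s : seq nat) (x : rat) : Prop :=
  exists2 j : nat, (1 <= j)%N & x = (part s j)%:R - j%:R + 1 / 2.

Definition frob_d (s : seq nat) : nat :=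
  count (fun i => i <= part s i)%N (iota 1 (size s)).

Definition frobC (s : seq nat) : seq rat :=
  [seq ((part s i)%:R - i%:R + 1 / 2 : rat) | i <- iota 1 (frob_d s)] ++
  [seq (- ((ptrans s i)%:R - i%:R) - 1 / 2 : rat) | i <- iota 1 (frob_d s)].

Definition hamming (l m : seq nat) : nat :=
  (size [seq x <- undup (frobC l) | x \notin frobC m] +
   size [seq x <- undup (frobC m) | x \notin frobC l])./2.

(* Cells are pairs (x, y) = (row, column), both >= 1. *)
Definition cell := (nat * nat)%type.

Definition young (s : seq nat) : {fset cell} :=
  [fset c in flatten [seq [seq (x, y) | y <- iota 1 (part s x)]
                     | x <- iota 1 (size s)]].

Definition adj (c d : cell) : bool :=
  ((c.1 == d.1) && ((c.2 == d.2.+1) || (d.2 == c.2.+1))) ||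
  ((c.2 == d.2) && ((c.1 == d.1.+1) || (d.1 == c.1.+1))).

Definition edge_connected (g : {fset cell}) : Prop :=
  forall c d, c \in g -> d \in g ->
    exists p : seq cell, [/\ path adj c p, last c p = d & all (fun e => e \in g) p].

Definition has_2x2 (g : {fset cell}) : Prop :=
  exists x y, [/\ (x, y) \in g, (x.+1, y) \in g, (x, y.+1) \in g & (x.+1, y.+1) \in g].

(* border_strip_rem l g s : g is a border strip of l with l \ g = s, i.e.
   s is a partition with Y_s in Y_l, g = Y_l \ Y_s (the skew diagram l/s),
   g nonempty, edge-connected and without 2x2 block. *)
Definition border_strip_rem (l : seq nat) (g : {fset cell}) (s : seq nat) : Prop :=
  [/\ is_partition s, (young s `<=` young l)%fset, g = (young l `\` young s)%fset
    & [/\ g != fset0, edge_connected g & ~ has_2x2 g]].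

Definition ht (g : {fset cell}) : nat := (size (undup [seq c.1 | c <- g])).-1.

(* Beta numbers: a partition l is determined by S_l, here shifted to the
   integers beta l j = l_j - j.  Removing a border strip in rows p..q moves the
   bead x = beta l p down to a free position y between beta l q.+1 and beta l q;
   the strip has x - y cells, and its height q - p is the number of beads
   strictly between y and x.
   A partition s left by strips of both lam and mu satisfies
   S_lam - x + y = S_s = S_mu - x' + y', which forces x in S_lam \ S_mu = {A1, A2}
   and y in S_mu \ S_lam = {B1, B2}, where A1 = lam_a - a, A2 = lam_b - b,
   B1 = mu_a' - a' and B2 = mu_b' - b'.  Comparing the sums of S_lam and S_mu over
   a large window, |lam| = |mu| gives A1 + A2 = B1 + B2.  Hence if A1 < B1 then
   B2 < A2 < A1 < B1, so y = B2 and x is A2 or A1: there are exactly two pairs,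
   nested since they share y, and their heights are found by counting the beads
   above y in S_lam and in S_mu.  The case B1 < A1 is the same with lam and mu
   exchanged. *)

From mathcomp Require Import all_boot all_order all_algebra.
From mathcomp Require Import finmap.
From mathcomp Require Import zify.
From Stdlib Require Import Classical_Prop.
Import Order.TTheory GRing.Theory Num.Theory.
Set Implicit Arguments. Unset Strict Implicit.
Local Open Scope fset_scope.

Notation geq_rel := (fun x y : nat => y <= x)%N.

Lemma geq_rel_trans : transitive geq_rel.
Proof. by move=> x y z h1 h2; exact: leq_trans h2 h1. Qed.

(* [in_beta s z] holds iff z + 1/2 is in S_s. *)
Definition beta (s : seq nat) (j : nat) : int := ((part s j)%:Z - j%:Z)%R.
Definition in_beta (s : seq nat) (z : int) : Prop := exists2 j, (1 <= j)%N & beta s j = z.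

Lemma part_default s j : (size s < j)%N -> part s j = 0%N.
Proof. by case: j => [|j] h; rewrite /part nth_default //=; lia. Qed.

Lemma beta_default s j : (size s < j)%N -> beta s j = (- j%:Z)%R.
Proof. by move=> h; rewrite /beta part_default // sub0r. Qed.

Section Partition.
Variable s : seq nat.
Hypothesis ps : is_partition s.

Lemma leq_part i j : (i <= j)%N -> (part s j <= part s i)%N.
Proof.
case/andP: ps => so _ hij; rewrite /part.
have [hj|] := ltnP j.-1 (size s); last by move=> hj; rewrite nth_default.
apply: (sorted_leq_nth geq_rel_trans) => //; rewrite ?inE -?subn1 ?leq_sub2r //.
by apply: leq_ltn_trans hj; rewrite -!subn1 leq_sub2r.
Qed.

Lemma beta_leq i j : (i <= j)%N -> (beta s j <= beta s i)%R.
Proof. by move=> hij; have := leq_part hij; rewrite /beta; lia. Qed.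

Lemma beta_ltn i j : (i < j)%N -> (beta s j < beta s i)%R.
Proof. by move=> hij; have := leq_part (ltnW hij); rewrite /beta; lia. Qed.

Lemma beta_inj : injective (beta s).
Proof.
move=> i j e; case: (ltngtP i j) => // h; have := beta_ltn h; by rewrite e ltxx.
Qed.

End Partition.

Lemma partition_ext s t : is_partition s -> is_partition t ->
  (forall j, (1 <= j)%N -> part s j = part t j) -> s = t.
Proof.
elim: s t => [|x s IH] [|y t] //=.
- by move=> _ /andP[_ /andP[ht _]] /(_ 1%N isT); rewrite /part /=; lia.
- by move=> /andP[_ /andP[hx _]] _ /(_ 1%N isT); rewrite /part /=; lia.
case/andP=> /= /path_sorted so /andP[_ al] /andP[/= /path_sorted so' /andP[_ al']] h.
have -> : x = y by exact: (h 1%N isT).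
congr (_ :: _); apply: IH; rewrite /is_partition ?so ?so' //.
by move=> j hj; have := h j.+1 isT; rewrite /part /=; case: j hj.
Qed.

Lemma beta_ext s t : is_partition s -> is_partition t ->
  (forall j, (1 <= j)%N -> beta s j = beta t j) -> s = t.
Proof. by move=> ps pt h; apply: partition_ext => // j /h; rewrite /beta; lia. Qed.

Lemma beta_set_ext s t : is_partition s -> is_partition t ->
  (forall z, in_beta s z <-> in_beta t z) -> s = t.
Proof.
move=> ps pt h; suff E : forall n j, (1 <= j <= n)%N -> beta s j = beta t j.
  by apply: beta_ext => // j j1; apply: (E j); rewrite j1 leqnn.
elim=> [|n IH] j hj; first lia.
have [hjn|hjn] := ltnP j n.+1; first by apply: IH; lia.
(* [beta s j] sits in S_t at an index [k >= j], the smaller ones being taken by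
   [beta s 1, ..., beta s j.-1]; hence [beta s j <= beta t j], and symmetrically. *)
have [k hk ek] : in_beta t (beta s j) by apply/h; exists j => //; lia.
have [m hm em] : in_beta s (beta t j) by apply/h; exists j => //; lia.
have hkj : (j <= k)%N.
  rewrite leqNgt; apply/negP => hkj; have := IH k; rewrite ek => /(_ ltac:(lia)).
  by move/(beta_inj ps); lia.
have hmj : (j <= m)%N.
  rewrite leqNgt; apply/negP => hmj; have := IH m; rewrite em => /(_ ltac:(lia)).
  by move/(beta_inj pt); lia.
by have := beta_leq pt hkj; have := beta_leq ps hmj; lia.
Qed.

Lemma in_beta_inS s (z : int) : inS s (z%:~R + 1 / 2)%R <-> in_beta s z.
Proof.
have betaE j : ((beta s j)%:~R : rat) = ((part s j)%:R - j%:R)%R by rewrite /beta rmorphB.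
split=> -[j hj e]; exists j => //; last by rewrite -betaE e.
by apply/eqP; rewrite -(eqr_int rat) betaE -(addrK (1 / 2)%R (_ - _)%R) -e addrK.
Qed.

Lemma nth_filter_pos (L : seq nat) i : sorted geq_rel L ->
  nth 0%N [seq x <- L | (0 < x)%N] i = nth 0%N L i.
Proof.
elim: L i => [|x L IH] i //= so.
case: ifP => [_|/negbT]; first by case: i => [|i] //=; rewrite IH // (path_sorted so).
rewrite -eqn0Ngt => /eqP x0.
have L0 : all (pred1 0%N) L.
  move: so; rewrite path_sortedE; last exact: geq_rel_trans.
  by case/andP=> /allP al _; apply/allP => z /al; rewrite x0 /=; lia.
have -> : [seq x <- L | (0 < x)%N] = [::].
  apply/eqP; rewrite -size_eq0 size_filter -(count_pred0 L).
  by apply/eqP/eq_in_count => z /(allP L0) /eqP ->.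
rewrite nth_nil; case: i => [|i] //=; case: (ltnP i (size L)) => hi; last by rewrite nth_default.
by move/allP/(_ _ (mem_nth 0%N hi))/eqP: L0.
Qed.

Section PartitionOfBeta.
Variables (b : nat -> int) (n : nat).
Hypothesis b_decr : forall j, (1 <= j)%N -> (b j.+1 < b j)%R.
Hypothesis b_default : forall j, (n < j)%N -> b j = (- j%:Z)%R.

Definition beta_partition :=
  [seq x <- [seq `|(b j + j%:Z)%R|%N | j <- iota 1 n] | (0 < x)%N].

Lemma beta_partition_ge0 j : (1 <= j)%N -> (0 <= b j + j%:Z)%R.
Proof.
move=> j1; move: {2}(n - j)%N (erefl (n - j)%N) => k.
elim: k j j1 => [|k IH] j j1 hk.
  case: (ltnP n j) => hj; first by rewrite b_default //; lia.
  by have := b_decr j1; rewrite b_default; lia.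
by have := IH j.+1 isT ltac:(lia); have := b_decr j1; lia.
Qed.

Lemma sorted_beta_partition m k : (1 <= m)%N ->
  sorted geq_rel [seq `|(b j + j%:Z)%R|%N | j <- iota m k].
Proof.
elim: k m => [|[|k] IH] m hm //=; apply/andP; split; last exact: (IH m.+1).
have := beta_partition_ge0 hm; have := @beta_partition_ge0 m.+1 isT.
by have := b_decr hm; rewrite /=; lia.
Qed.

Lemma is_partition_beta_partition : is_partition beta_partition.
Proof.
apply/andP; split; last by apply/allP => x; rewrite mem_filter => /andP[].
exact/(sorted_filter geq_rel_trans)/sorted_beta_partition.
Qed.

Lemma beta_beta_partition j : (1 <= j)%N -> beta beta_partition j = b j.
Proof.
move=> hj; rewrite /beta /part /beta_partition nth_filter_pos ?sorted_beta_partition //.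
case: (ltnP j.-1 n) => hjn.
  rewrite (nth_map 0%N) ?size_iota // nth_iota //.
  by have := beta_partition_ge0 hj; case: j hj hjn => //= j _ _; rewrite add1n; lia.
by rewrite nth_default ?size_map ?size_iota // b_default //; lia.
Qed.

End PartitionOfBeta.

Lemma mem_young s x y :
  ((x, y) \in young s) = [&& (0 < x)%N, (0 < y)%N & (y <= part s x)%N].
Proof.
rewrite /young in_fset; apply/flatten_mapP/idP.
- by case=> x' hx' /mapP[y' hy' [-> ->]]; move: hx' hy'; rewrite !mem_iota; lia.
case/and3P=> h1 h2 h3; exists x.
  by rewrite mem_iota; case: (leqP x (size s)) => hx; last rewrite part_default in h3; lia.
by apply/mapP; exists y; rewrite ?mem_iota //; lia.
Qed.

Lemma card_young s : #|` young s| = psize s.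
Proof.
rewrite /young card_fseq undup_id.
  rewrite size_flatten /shape -map_comp /psize -{3}(mkseq_nth 0%N s) /mkseq.
  rewrite -(addn0 1%N) iotaDl -map_comp; congr sumn; apply: eq_map => x /=.
  by rewrite size_map size_iota.
have U m k : uniq (flatten [seq [seq (x, y) | y <- iota 1 (part s x)] | x <- iota m k]).
  elim: k m => [|k IH] m //=; rewrite cat_uniq IH andbT.
  rewrite map_inj_uniq ?iota_uniq /=; last by move=> u v [].
  apply/hasPn => -[x y] /flatten_mapP[x' + /mapP[y' _ [ex _]]].
  by rewrite mem_iota ex; apply: contraL => /mapP[? _ [->]]; lia.
exact: U.
Qed.

Lemma mem_skew l s x y : ((x, y) \in young l `\` young s) =
  [&& (0 < x)%N, (part s x < y)%N & (y <= part l x)%N].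
Proof. by rewrite in_fsetD !mem_young; case: (posnP x); case: (posnP y) => //; lia. Qed.

Lemma young_subP s l :
  reflect (forall x, (1 <= x)%N -> (part s x <= part l x)%N) (young s `<=` young l).
Proof.
apply: (iffP idP) => [/fsubsetP sub x hx|h]; last apply/fsubsetP => -[x y].
  case: (posnP (part s x)) => [-> //|hp].
  have /sub : (x, part s x) \in young s by rewrite mem_young hx hp leqnn.
  by rewrite mem_young => /and3P[].
by rewrite !mem_young => /and3P[h1 h2 h3]; rewrite h1 h2 (leq_trans h3) ?h.
Qed.

Definition linked (g : {fset cell}) (c d : cell) :=
  exists p : seq cell, [/\ path adj c p, last c p = d & all (fun e => e \in g) p].

Lemma linked_refl g c : linked g c c.
Proof. by exists [::]. Qed.

Lemma linked_trans g c d e : linked g c d -> linked g d e -> linked g c e.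
Proof.
case=> p1 [h1 <- h3] [p2 [k1 k2 k3]]; exists (p1 ++ p2).
by rewrite cat_path last_cat all_cat h1 h3 k1 k2 k3.
Qed.

Lemma linked_adj g c d : adj c d -> d \in g -> linked g c d.
Proof. by move=> a dg; exists [:: d]; rewrite /= a dg. Qed.

Lemma adj_sym : symmetric adj.
Proof. by move=> [x y] [x' y']; rewrite /adj /=; lia. Qed.

Lemma linked_sym g c d : c \in g -> linked g c d -> linked g d c.
Proof.
move=> cg [p [h1 <- h3]]; exists (rev (belast c p)); split.
- by rewrite rev_path (eq_path (e' := adj)) // => x y; rewrite adj_sym.
- by elim: p c {h1 cg h3} => //= x p IH c; rewrite rev_cons last_rcons.
rewrite all_rev; apply/allP => e /mem_belast; rewrite inE => /orP[/eqP -> //|].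
exact: (allP h3).
Qed.

(* The skew shape l/s occupies the rows p..q, and consecutive rows overlap in
   exactly one column. *)
Definition strip_rows (l s : seq nat) (p q : nat) :=
  [/\ (1 <= p <= q)%N,
      forall x, (p <= x <= q)%N -> (part s x < part l x)%N,
      forall x, (p <= x < q)%N -> part l x.+1 = (part s x).+1
    & forall x, (1 <= x)%N -> (x < p)%N || (q < x)%N -> part s x = part l x].

Section StripRows.
Variables (l s : seq nat) (p q : nat).
Hypothesis rows : strip_rows l s p q.
Local Notation g := (young l `\` young s).

Lemma skew_rows x y : (x, y) \in g -> (p <= x <= q)%N.
Proof.
case: rows => _ _ _ out; rewrite mem_skew => /and3P[x0 h1 h2].
by case: (boolP ((x < p)%N || (q < x)%N)) => [/(out x x0)|]; lia.
Qed.

Lemma strip_rows_sub : young s `<=` young l.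
Proof.
case: rows => _ inn _ out; apply/young_subP => x x0.
case: (boolP ((x < p)%N || (q < x)%N)) => [/(out x x0) -> //|hx].
by rewrite ltnW ?inn //; lia.
Qed.

Lemma linked_row x y y' : (0 < x)%N -> (part s x < y' <= y)%N -> (y <= part l x)%N ->
  linked g (x, y) (x, y').
Proof.
move=> x0 /andP[h1 h2]; elim: y h2 => [|y IH] h2 h3; first lia.
case: (ltngtP y' y.+1) => [hy||->]; [|lia|exact: linked_refl].
apply: linked_trans (IH _ _); try lia; apply: linked_adj; first by rewrite /adj /=; lia.
by rewrite mem_skew; apply/and3P; split; lia.
Qed.

Lemma linked_to_corner c : c \in g -> linked g c (q, (part s q).+1).
Proof.
case: rows => /andP[p1 pq] inn step _; case: c => x y hc.
have /andP[px xq] := skew_rows hc; move: hc; rewrite mem_skew => /and3P[_ h1 h2].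
move: {2}(q - x)%N (erefl (q - x)%N) => n.
elim: n x y px xq h1 h2 => [|n IH] x y px xq h1 h2 qx.
  have ex : x = q by lia.
  by subst x; apply: linked_row => //; lia.
apply: linked_trans (linked_row (y' := (part s x).+1) _ _ h2) _; [lia|lia|].
have e := step x ltac:(lia); have := inn x.+1 ltac:(lia) => hx1.
apply: (@linked_trans _ _ (x.+1, (part s x).+1)); last by apply: IH; lia.
apply: linked_adj; first by rewrite /adj /=; lia.
by rewrite mem_skew; apply/and3P; split; lia.
Qed.

Lemma skew_border_strip : is_partition s -> border_strip_rem l g s.
Proof.
move=> ps; have [/andP[p1 pq] inn step out] := rows.
split=> //; first exact: strip_rows_sub; split.
- apply/fset0Pn; exists (p, part l p); rewrite mem_skew; have := inn p; lia.
- move=> c d hc hd.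
  exact: linked_trans (linked_to_corner hc) (linked_sym hd (linked_to_corner hd)).
case=> x [y [c1 c2 c3 c4]]; have /andP[px xq] := skew_rows c1.
move: c1 c4; rewrite !mem_skew => /and3P[x0 h1 _] /and3P[_ _ h4].
have [xq'|ex] : (x < q)%N \/ x = q by lia.
  by have := step x; lia.
by subst x; move: (out q.+1 isT) (leq_part ps (leqnSn q)); rewrite ltnSn orbT; lia.
Qed.

Lemma ht_skew : ht g = (q - p)%N.
Proof.
have [/andP[p1 pq] inn _ _] := rows.
have rowsE : undup [seq c.1 | c <- g] =i iota p (q - p).+1.
  move=> x; rewrite mem_undup mem_iota; apply/mapP/idP => [[[x' y'] /skew_rows] /=|hx].
    by move=> + ->; lia.
  exists (x, (part s x).+1) => //; rewrite mem_skew; have := inn x; lia.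
by rewrite /ht (perm_size (uniq_perm (undup_uniq _) (iota_uniq _ _) rowsE)) size_iota.
Qed.

End StripRows.

Lemma linked_below_gap l s w c d : (part l w.+1 <= part s w)%N ->
  c \in young l `\` young s -> (c.1 <= w)%N -> linked (young l `\` young s) c d ->
  (d.1 <= w)%N.
Proof.
move=> hw + + [pth [+ <- +]].
elim: pth c => [|e pth IH] c //= hc hcw /andP[ace hp] /andP[he hall].
apply: IH hp hall => //; move: c e hc he ace hcw => [x1 y1] [x2 y2] /=.
rewrite !mem_skew /adj /= => hc he ace hcw; case: (leqP x2 w) => // hx2.
have ex2 : x2 = w.+1 by lia.
have ex1 : x1 = w by lia.
by subst; lia.
Qed.

Lemma border_strip_rows l g s : is_partition l -> border_strip_rem l g s ->
  exists p q, strip_rows l s p q.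
Proof.
move=> pl [ps /young_subP hsub -> [hne hconn hno2]].
pose meets x := (1 <= x)%N && (part s x < part l x)%N.
have meets_cell x : meets x -> (x, part l x) \in young l `\` young s.
  by rewrite mem_skew => /andP[]; lia.
(* connectedness leaves no gap in the rows: a path in the strip cannot get past
   row [w] when rows [w] and [w.+1] share no column *)
have overlap x z w : meets x -> meets z -> (x <= w < z)%N -> (part s w < part l w.+1)%N.
  move=> hx hz /andP[xw wz]; rewrite ltnNge; apply/negP => hc.
  have := hconn _ _ (meets_cell x hx) (meets_cell z hz).
  by move/(linked_below_gap hc (meets_cell x hx) xw) => /=; lia.
have hno x : (1 <= x)%N -> (part l x.+1 <= (part s x).+1)%N.
  move=> x0; rewrite leqNgt; apply/negP => hlt; apply: hno2.
  have m1 := leq_part pl (leqnSn x); have m2 := leq_part ps (leqnSn x).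
  by exists x, (part s x).+1; split; rewrite mem_skew; apply/and3P; split; lia.
have exP : exists x, meets x.
  by case/fset0Pn: hne => -[x y]; rewrite mem_skew => /and3P[]; exists x; rewrite /meets; lia.
have meets_size x : meets x -> (x <= size l)%N.
  move=> /andP[_]; case: (leqP x (size l)) => // /part_default ->; lia.
case: (ex_minnP exP) => p Pp minp; case: (ex_maxnP exP meets_size) => q Pq maxq.
have pq : (p <= q)%N by apply: maxq.
exists p, q; split.
- by case/andP: Pp; lia.
- move=> x /andP[px xq]; case: (ltngtP p x) => [px'||<-]; [|lia|by case/andP: Pp].
  have := overlap p q x.-1 Pp Pq; have := leq_part ps (leq_pred x); rewrite prednK; lia.
- by move=> x hx; have := overlap p q x Pp Pq hx; have := hno x; case/andP: Pp; lia.
move=> x x0 hx; have := hsub x x0; rewrite leq_eqVlt => /orP[/eqP //|hlt].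
have Px : meets x by rewrite /meets x0.
by have := minp x Px; have := maxq x Px; lia.
Qed.

Local Open Scope ring_scope.

Lemma part_beta s j : (part s j)%:Z = beta s j + j%:Z.
Proof. by rewrite /beta; lia. Qed.

Definition bead_move (R : int -> Prop) (x y : int) (z : int) : Prop := (R z /\ z <> x) \/ z = y.

Section BeadMove.
Variables (R : int -> Prop) (x y : int).
Hypotheses (Rx : R x) (nRy : ~ R y) (yx : y <> x).

Lemma bead_move_diffl z : (R z /\ ~ bead_move R x y z) <-> z = x.
Proof.
split=> [[Rz nz]|->]; last by split=> // -[[_ //]|/esym].
by apply: NNPP => zx; apply: nz; left.
Qed.

Lemma bead_move_diffr z : (bead_move R x y z /\ ~ R z) <-> z = y.
Proof. by split=> [[[[Rz _]|//] /(_ Rz)]|->]; last split; [|right|]. Qed.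

End BeadMove.

Lemma bead_move_swap (Rl Rm : int -> Prop) x y x' y' :
  (forall z, (Rl z /\ ~ Rm z) <-> z = x \/ z = y') ->
  (forall z, (Rm z /\ ~ Rl z) <-> z = x' \/ z = y) -> x <> y' -> x' <> y ->
  forall z, bead_move Rl x y z <-> bead_move Rm x' y' z.
Proof.
move=> HA HB h1 h2 z; split=> [[[hl hx]|->]|[[hm hx]|->]].
- have [hm|hm] := classic (Rm z); last by right; have [] := proj1 (HA z) (conj hl hm).
  by left; split=> // e; subst z; case: (proj2 (HB x') (or_introl erefl)).
- by left; have [hm _] := proj2 (HB y) (or_intror erefl); split=> // e; subst.
- have [hl|hl] := classic (Rl z); last by right; have [] := proj1 (HB z) (conj hm hl).
  by left; split=> // e; subst z; case: (proj2 (HA x) (or_introl erefl)).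
by left; have [hl _] := proj2 (HA y') (or_intror erefl); split=> // e; subst.
Qed.

Lemma bead_move_common (Rl Rm : int -> Prop) A1 A2 B1 B2 x y x' y' :
  A1 <> A2 -> B1 <> B2 ->
  (forall z, (Rl z /\ ~ Rm z) <-> z = A1 \/ z = A2) ->
  (forall z, (Rm z /\ ~ Rl z) <-> z = B1 \/ z = B2) ->
  (forall z, bead_move Rl x y z <-> bead_move Rm x' y' z) ->
  (x = A1 \/ x = A2) /\ (y = B1 \/ y = B2).
Proof.
move=> nA nB HA HB H.
(* an element of Rl \ Rm other than x survives the move, so it is the new bead y' *)
have kA A : Rl A -> ~ Rm A -> A <> x -> A = y'.
  by move=> hl hm hx; case: (proj1 (H A) (or_introl (conj hl hx))) => // -[].
have kB B : Rm B -> ~ Rl B -> B <> x' -> B = y.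
  by move=> hm hl hx; case: (proj2 (H B) (or_introl (conj hm hx))) => // -[].
have [a1 a1'] := proj2 (HA A1) (or_introl erefl).
have [a2 a2'] := proj2 (HA A2) (or_intror erefl).
have [b1 b1'] := proj2 (HB B1) (or_introl erefl).
have [b2 b2'] := proj2 (HB B2) (or_intror erefl).
split.
- have [e1|e1] := classic (x = A1); first by left.
  have [e2|e2] := classic (x = A2); first by right.
  by case: nA; rewrite (kA A1 a1 a1' (not_eq_sym e1)) (kA A2 a2 a2' (not_eq_sym e2)).
have [e1|e1] := classic (x' = B1).
  by right; apply/esym/kB => //; rewrite e1 => /esym.
by left; apply/esym/kB => // /esym.
Qed.

(* a strip in rows p..q, whose removal moves the bead [beta l p] down to [y] *)
Definition strip_data (l : seq nat) (p q : nat) (y : int) :=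
  [/\ (1 <= p)%N, (p <= q)%N, beta l q.+1 < y & y < beta l q].

Definition strip_beta l p q y j : int :=
  if (j < p)%N then beta l j else if (j < q)%N then beta l j.+1
  else if j == q then y else beta l j.

Definition strip_rem l p q y := beta_partition (strip_beta l p q y) (size l).

Definition strip l p q y := young l `\` young (strip_rem l p q y).

Section StripData.
Variables (l : seq nat) (p q : nat) (y : int).
Hypothesis pl : is_partition l.
Hypothesis sd : strip_data l p q y.
Local Notation s := (strip_rem l p q y).

Lemma strip_data_size : (q <= size l)%N.
Proof.
case: sd => _ _ h1 h2; rewrite leqNgt; apply/negP => hq.
by move: h1 h2; rewrite !beta_default //; lia.
Qed.

Lemma ltr_strip_data j : (1 <= j)%N -> (y < beta l j) = (j <= q)%N.
Proof. by case: sd => _ _ h1 h2 j1; case: (leqP j q) => hjq; have := beta_leq pl hjq; lia. Qed.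

Lemma strip_data_lt : y < beta l p.
Proof. by case: sd => h1 h2 _ _; rewrite ltr_strip_data. Qed.

Lemma strip_data_notin : ~ in_beta l y.
Proof.
case=> j j1 e; have := ltr_strip_data j1; rewrite e ltxx => /esym/negbT.
rewrite -ltnNge => qj.
by case: sd => _ _ h1 _; have := beta_leq pl qj; lia.
Qed.

Lemma strip_beta_ltq j : (j < q)%N ->
  strip_beta l p q y j = if (j < p)%N then beta l j else beta l j.+1.
Proof. by rewrite /strip_beta => ->; case: ifP. Qed.

Lemma strip_beta_q : strip_beta l p q y q = y.
Proof. by case: sd => _ pq _ _; rewrite /strip_beta ltnNge pq ltnn eqxx. Qed.

Lemma strip_beta_gt j : (q < j)%N -> strip_beta l p q y j = beta l j.
Proof.
case: sd => _ pq _ _ qj.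
by rewrite /strip_beta ltnNge (ltnW (leq_ltn_trans pq qj)) ltnNge (ltnW qj) gtn_eqF.
Qed.

Lemma strip_beta_decr j : (1 <= j)%N -> strip_beta l p q y j.+1 < strip_beta l p q y j.
Proof.
move=> j1; have [p1 pq h1 h2] := sd.
have b1 := beta_ltn pl (ltnSn j); have b2 := beta_ltn pl (ltnSn j.+1).
have [qj|jq|ejq] := ltngtP q j.
- by rewrite !strip_beta_gt //; lia.
- rewrite (strip_beta_ltq jq); have [jq'|ejq] : (j.+1 < q)%N \/ j.+1 = q by lia.
    by rewrite (strip_beta_ltq jq'); case: (ltnP j.+1 p) => ?; case: (ltnP j p) => ?; lia.
  by case: (ltnP j p) => ?; rewrite ejq strip_beta_q; rewrite ejq in b1; lia.
- by rewrite -{2}ejq strip_beta_q strip_beta_gt -?ejq.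
Qed.

Lemma strip_beta_default j : (size l < j)%N -> strip_beta l p q y j = - j%:Z.
Proof.
have [p1 pq _ _] := sd; have qs := strip_data_size.
by move=> hj; rewrite /strip_beta !ifN ?beta_default //; lia.
Qed.

Lemma strip_beta_ge j : (1 <= j)%N -> beta l j.+1 <= strip_beta l p q y j.
Proof.
case: sd => _ _ h1 _ j1; have := beta_ltn pl (ltnSn j).
have [jq|qj|->] := ltngtP j q; last by rewrite strip_beta_q; lia.
  by rewrite strip_beta_ltq //; case: ifP => _; lia.
by rewrite strip_beta_gt //; lia.
Qed.

Lemma strip_rem_partition : is_partition s.
Proof. exact: is_partition_beta_partition strip_beta_decr strip_beta_default. Qed.

Lemma beta_strip_rem j : (1 <= j)%N -> beta s j = strip_beta l p q y j.
Proof. exact: (beta_beta_partition strip_beta_decr strip_beta_default). Qed.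

Lemma in_beta_strip_rem z : in_beta s z <-> bead_move (in_beta l) (beta l p) y z.
Proof.
have [p1 pq h1 h2] := sd; split=> [[j j1 <-]|[[[j j1 <-] jp]|->]].
- rewrite beta_strip_rem //.
  case: (ltngtP j q) => [jq|qj|->]; last by rewrite strip_beta_q; right.
    rewrite strip_beta_ltq //; left; case: (ltnP j p) => jp.
      by split; [exists j | move/(beta_inj pl); lia].
    by split; [exists j.+1 | move/(beta_inj pl); lia].
  by rewrite strip_beta_gt //; left; split; [exists j | move/(beta_inj pl); lia].
- have {}jp : j <> p by move=> e; apply: jp; rewrite e.
  have [jp'|pj] := ltnP j p.
    by exists j; rewrite // beta_strip_rem // strip_beta_ltq ?jp' //; lia.
  have [jq|qj] := leqP j q; last by exists j; rewrite // beta_strip_rem // strip_beta_gt.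
  exists j.-1; first lia.
  by rewrite beta_strip_rem ?strip_beta_ltq ?ifN ?prednK //; lia.
by exists q; rewrite ?beta_strip_rem ?strip_beta_q //; lia.
Qed.

Lemma strip_rows_rem : strip_rows l s p q.
Proof.
have [p1 pq h1 h2] := sd.
have ps x : (1 <= x)%N -> (part s x)%:Z = strip_beta l p q y x + x%:Z.
  by move=> x1; rewrite part_beta beta_strip_rem.
have pl' x : (part l x)%:Z = beta l x + x%:Z := part_beta l x.
split=> [|x /andP[px xq]|x /andP[px xq]|x x1 /orP[xp|qx]].
- by rewrite p1.
- have := ps x; have := pl' x; have := beta_ltn pl (ltnSn x).
  have [xq'|->] : (x < q)%N \/ x = q by lia.
    by rewrite strip_beta_ltq // ifN; lia.
  by rewrite strip_beta_q; lia.
- by have := ps x; have := pl' x.+1; rewrite strip_beta_ltq // ifN; lia.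
- by have := ps x; have := pl' x; rewrite strip_beta_ltq ?xp; lia.
- by have := ps x; have := pl' x; rewrite strip_beta_gt //; lia.
Qed.

Lemma strip_border_strip : border_strip_rem l (strip l p q y) s.
Proof. exact: skew_border_strip strip_rows_rem strip_rem_partition. Qed.

Lemma ht_strip : ht (strip l p q y) = (q - p)%N.
Proof. exact: ht_skew strip_rows_rem. Qed.

End StripData.

Lemma strip_data_uniq l p q p' q' y : is_partition l ->
  strip_data l p q y -> strip_data l p' q' y -> q = q'.
Proof.
move=> pl sd sd'; have [p1 pq _ _] := sd; have [p1' pq' _ _] := sd'.
have E j : (1 <= j)%N -> (j <= q)%N = (j <= q')%N.
  by move=> j1; rewrite -(ltr_strip_data pl sd) // (ltr_strip_data pl sd').
by apply/eqP; rewrite eqn_leq E ?leqnn -?E ?leqnn //; lia.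
Qed.

Lemma strip_data_exists l p y : is_partition l -> (1 <= p)%N -> ~ in_beta l y ->
  y < beta l p -> exists q, strip_data l p q y.
Proof.
move=> pl p1 ny yp; suff H k p' : (1 <= p')%N -> y < beta l p' -> beta l (p' + k) <= y ->
    exists q, strip_data l p' q y.
  by apply: (H (size l + `|y|%N).+1 p p1 yp); rewrite beta_default; lia.
elim: k p' => [|k IH] p' p1' yp' hk; first by rewrite addn0 in hk; lia.
have [h|h] := ltP y (beta l p'.+1).
  have := IH p'.+1 isT h; rewrite addSnnS => /(_ hk) [q [_ pq h1 h2]].
  by exists q; split=> //; lia.
exists p'; split=> //; rewrite lt_neqAle h andbT.
by apply/eqP => e; apply: ny; exists p'.+1.
Qed.

Lemma strip_incl l p1 q1 y1 p2 q2 y2 : is_partition l ->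
  strip_data l p1 q1 y1 -> strip_data l p2 q2 y2 -> (p2 <= p1)%N -> y2 <= y1 ->
  strip l p1 q1 y1 `<=` strip l p2 q2 y2.
Proof.
move=> pl sd1 sd2 hp hy; apply/fsetDS/young_subP => x x1.
suff : strip_beta l p2 q2 y2 x <= strip_beta l p1 q1 y1 x.
  by rewrite -!beta_strip_rem // /beta; lia.
have [p11 pq1 h1 h1'] := sd1; have [_ pq2 h2 h2'] := sd2.
have hq : (q1 <= q2)%N by rewrite -(ltr_strip_data pl sd2); lia.
have [xq|qx|->] := ltngtP x q2.
- rewrite strip_beta_ltq //; have [xp|px] := ltnP x p2.
    by rewrite strip_beta_ltq ?ifT //; lia.
  exact: strip_beta_ge.
- by rewrite !strip_beta_gt //; lia.
rewrite (strip_beta_q sd2); have [q12|e] : (q1 < q2)%N \/ q1 = q2 by lia.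
  by rewrite (strip_beta_gt sd1) //; lia.
by rewrite -e (strip_beta_q sd1).
Qed.

Lemma border_strip_strip_data l g s : is_partition l -> border_strip_rem l g s ->
  exists p q y, [/\ strip_data l p q y, s = strip_rem l p q y & g = strip l p q y].
Proof.
move=> pl bs; have [p [q rows]] := border_strip_rows pl bs.
case: bs => ps _ -> _; have [/andP[p1 pq] inn step out] := rows.
have pb x : (part s x)%:Z = beta s x + x%:Z := part_beta s x.
have lb x : (part l x)%:Z = beta l x + x%:Z := part_beta l x.
have sd : strip_data l p q (beta s q).
  split=> //; last by have := inn q; have := pb q; have := lb q; rewrite pq; lia.
  have := out q.+1 isT; rewrite ltnSn orbT => /(_ isT).
  by have := beta_ltn ps (ltnSn q); have := pb q.+1; have := lb q.+1; lia.
suff -> : s = strip_rem l p q (beta s q) by exists p, q, (beta s q).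
apply: beta_ext ps (strip_rem_partition pl sd) _ => j j1; rewrite beta_strip_rem //.
have [jq|qj|->] := ltngtP j q; last by rewrite (strip_beta_q sd).
  rewrite strip_beta_ltq //; case: ltnP => jp.
    by have := out j j1; rewrite jp => /(_ isT); have := pb j; have := lb j; lia.
  by have := step j; rewrite jp jq => /(_ isT); have := pb j; have := lb j.+1; lia.
rewrite (strip_beta_gt sd) //; have := out j j1; rewrite qj orbT => /(_ isT).
by have := pb j; have := lb j; lia.
Qed.

Definition beta_seq (l : seq nat) (N : nat) : seq int := [seq beta l j | j <- iota 1 N].

Lemma mem_beta_seq l N z : (size l <= N)%N ->
  (z \in beta_seq l N) <-> in_beta l z /\ - N%:Z <= z.
Proof.
move=> hN; split=> [/mapP[j] |[[j j1 <-] hz]].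
  by rewrite mem_iota => /andP[j1 jN] ->; split; [exists j | rewrite /beta]; lia.
apply/mapP; exists j => //; rewrite mem_iota j1 /=.
by case: (leqP j N) => jN; last rewrite beta_default in hz; lia.
Qed.

Lemma uniq_beta_seq l N : is_partition l -> uniq (beta_seq l N).
Proof. by move=> pl; rewrite map_inj_uniq ?iota_uniq //; exact: beta_inj. Qed.

Lemma beta_diff_ge l m N z : (size l <= N)%N -> (size m <= N)%N ->
  in_beta l z -> ~ in_beta m z -> - N%:Z <= z.
Proof.
move=> hl hm [j j1 <-] nm; case: (leqP j N) => jN; first by rewrite /beta; lia.
by case: nm; exists j => //; rewrite !beta_default //; lia.
Qed.

Lemma sum_beta_seq l N : (size l <= N)%N ->
  \sum_(z <- beta_seq l N) z = (psize l)%:Z - \sum_(j <- iota 1 N) j%:Z.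
Proof.
move=> hN; rewrite big_map /beta sumrB; congr (_ - _).
rewrite -(big_morph Posz PoszD (erefl 0%:Z)) /psize; congr Posz.
elim: l N hN => [N _|x l IH [|N] //= hN].
  by rewrite big1 // => j; rewrite /part nth_nil.
rewrite big_cons -(IH N) // -(addn1 1) iotaDl big_map; congr (_ + _)%N.
by apply: eq_big_seq => -[|j]; rewrite mem_iota // /part add1n.
Qed.

Lemma count_beta_seq l N (v : int) k : (k <= N)%N ->
  (forall j, (1 <= j)%N -> (v < beta l j) = (j <= k)%N) ->
  count (fun z => v < z) (beta_seq l N) = k.
Proof.
move=> kN h; rewrite count_map -(subnKC kN) iotaD count_cat.
rewrite (@eq_in_count _ _ predT) ?count_predT ?size_iota; last first.
  by move=> j; rewrite mem_iota => /andP[j1 jk] /=; rewrite h //; lia.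
rewrite (@eq_in_count _ _ pred0) ?count_pred0 ?addn0 // => j.
by rewrite mem_iota => /andP[j1 _] /=; rewrite h; lia.
Qed.

Lemma mem_beta_seq_cat l m N Y : (size l <= N)%N -> (size m <= N)%N ->
  (forall z, (in_beta m z /\ ~ in_beta l z) <-> z \in Y) ->
  forall z, z \in beta_seq l N ++ Y <-> (in_beta l z \/ in_beta m z) /\ - N%:Z <= z.
Proof.
move=> hl hm hY z; rewrite mem_cat; split.
  case/orP=> [/(mem_beta_seq z hl) [lz zN]|/hY [mz nlz]]; split; auto.
  exact: beta_diff_ge mz nlz.
case=> lmz zN; apply/orP; have [lz|nlz] := classic (in_beta l z).
  by left; apply/(mem_beta_seq z hl).
by right; apply/hY; case: lmz.
Qed.

Section Exchange.
Variables (l m : seq nat) (X Y : seq int).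
Hypotheses (pl : is_partition l) (pm : is_partition m) (uX : uniq X) (uY : uniq Y).
Hypothesis hX : forall z, (in_beta l z /\ ~ in_beta m z) <-> z \in X.
Hypothesis hY : forall z, (in_beta m z /\ ~ in_beta l z) <-> z \in Y.

Lemma perm_beta_seq_exchange N : (size l <= N)%N -> (size m <= N)%N ->
  perm_eq (beta_seq l N ++ Y) (beta_seq m N ++ X).
Proof.
move=> hl hm; have memY := mem_beta_seq_cat hl hm hY.
have memX := mem_beta_seq_cat hm hl hX.
apply: uniq_perm.
- rewrite cat_uniq uniq_beta_seq // uY andbT; apply/hasPn => z /hY [_ nlz].
  by apply/negP => /(mem_beta_seq z hl) [].
- rewrite cat_uniq uniq_beta_seq // uX andbT; apply/hasPn => z /hX [_ nmz].
  by apply/negP => /(mem_beta_seq z hm) [].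
move=> z; apply/idP/idP => [/memY|/memX] [lm zN]; [apply/memX|apply/memY].
  by split=> //; case: lm; auto.
by split=> //; case: lm; auto.
Qed.

Lemma psize_exchange : (psize l)%:Z + \sum_(z <- Y) z = (psize m)%:Z + \sum_(z <- X) z.
Proof.
pose N := (size l + size m)%N; have hl : (size l <= N)%N := leq_addr _ _.
have hm : (size m <= N)%N := leq_addl _ _.
suff : (psize l)%:Z - \sum_(j <- iota 1 N) j%:Z + \sum_(z <- Y) z =
       (psize m)%:Z - \sum_(j <- iota 1 N) j%:Z + \sum_(z <- X) z by lia.
by rewrite -!sum_beta_seq // -!big_cat; exact/perm_big/perm_beta_seq_exchange.
Qed.

(* both sides count the beads above [y] in S_l and S_m: [q] of them are in S_l
   and [j.-1] in S_m *)
Lemma strip_index p q y j : strip_data l p q y -> (1 <= j)%N -> y = beta m j ->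
  (q + count (fun z => y < z)%R Y = j.-1 + count (fun z => y < z)%R X)%N.
Proof.
move=> sd j1 ey; subst y; pose N := (size l + size m + j)%N.
have hl : (size l <= N)%N by rewrite /N; lia.
have hm : (size m <= N)%N by rewrite /N; lia.
have cl : count (fun z => beta m j < z) (beta_seq l N) = q.
  apply: count_beta_seq => [|i]; last exact: (ltr_strip_data pl sd (j := i)).
  by have := strip_data_size pl sd; lia.
have cm : count (fun z => beta m j < z) (beta_seq m N) = j.-1.
  apply: count_beta_seq => [|i i1]; first by rewrite /N; lia.
  have [ij|ji] := ltnP i j; first by rewrite (beta_ltn pm ij) -ltnS prednK.
  by rewrite ltNge (beta_leq pm ji) -ltnS prednK // ltnNge ji.
have := permP (perm_beta_seq_exchange hl hm) (fun z => beta m j < z).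
by rewrite !count_cat cl cm.
Qed.

End Exchange.

Lemma card_strip l p q y : is_partition l -> strip_data l p q y ->
  (#|` strip l p q y|)%:Z = beta l p - y.
Proof.
move=> pl sd; set s := strip_rem l p q y.
have ps : is_partition s := strip_rem_partition pl sd.
have R := in_beta_strip_rem pl sd; have ny := strip_data_notin pl sd.
have yx : y <> beta l p by move=> e; have := strip_data_lt pl sd; rewrite e ltxx.
have lp : in_beta l (beta l p) by exists p; case: sd.
have hX z : (in_beta l z /\ ~ in_beta s z) <-> z \in [:: beta l p].
  rewrite inE; split=> [[lz nsz]|/eqP ->].
    by apply/eqP/(bead_move_diffl lp yx); split=> // /R.
  by have [_ nb] := proj2 (bead_move_diffl lp yx (beta l p)) erefl; split=> // /R.
have hY z : (in_beta s z /\ ~ in_beta l z) <-> z \in [:: y].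
  rewrite inE; split=> [[/R sz nlz]|/eqP ->].
    by apply/eqP/(bead_move_diffr (beta l p) ny).
  by have [sz _] := proj2 (bead_move_diffr (beta l p) ny y) erefl; split=> //; apply/R.
have := psize_exchange pl ps (isT : uniq [:: beta l p]) (isT : uniq [:: y]) hX hY.
rewrite !big_seq1 /strip cardfsDS; last by have [] := strip_border_strip pl sd.
by have := strip_data_lt pl sd; rewrite !card_young -/s; lia.
Qed.

Lemma strip_rem_eqP lam mu p q y p' q' y' : is_partition lam -> is_partition mu ->
  strip_data lam p q y -> strip_data mu p' q' y' ->
  strip_rem lam p q y = strip_rem mu p' q' y' <->
  forall z, bead_move (in_beta lam) (beta lam p) y z <-> bead_move (in_beta mu) (beta mu p') y' z.
Proof.
move=> pl pm sd sd'; split=> [E z|H].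
  by rewrite -(in_beta_strip_rem pl sd) -(in_beta_strip_rem pm sd') E.
apply: beta_set_ext (strip_rem_partition pl sd) (strip_rem_partition pm sd') _ => z.
by rewrite (in_beta_strip_rem pl sd) (in_beta_strip_rem pm sd').
Qed.

Definition strip_pair (lam mu : seq nat) (g g' : {fset cell}) :=
  exists s, border_strip_rem lam g s /\ border_strip_rem mu g' s.

Definition two_strip_pairs (lam mu : seq nat) (g1 g1' g2 g2' : {fset cell}) :=
  [/\ (g1, g1') <> (g2, g2'),
      forall g g', strip_pair lam mu g g' <-> (g, g') = (g1, g1') \/ (g, g') = (g2, g2')
    & g1 `<=` g2 /\ g1' `<=` g2'].

Lemma two_strip_pairs_sym lam mu g1 g1' g2 g2' :
  two_strip_pairs lam mu g1 g1' g2 g2' -> two_strip_pairs mu lam g1' g1 g2' g2.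
Proof.
case=> D U [I I']; split=> // [[e1 e2]|g' g]; first by apply: D; rewrite e1 e2.
have sym : strip_pair mu lam g' g <-> strip_pair lam mu g g' by split=> -[s [? ?]]; exists s.
by rewrite sym U; split=> -[[-> ->]|[-> ->]]; auto.
Qed.

Section TwoMoves.
Variables (lam mu : seq nat) (a b a' b' : nat).
Hypotheses (pl : is_partition lam) (pm : is_partition mu) (hsz : psize mu = psize lam).
Hypotheses (ha : (1 <= a)%N) (hab : (a < b)%N) (ha' : (1 <= a')%N) (hab' : (a' < b')%N).
Local Notation A1 := (beta lam a).
Local Notation A2 := (beta lam b).
Local Notation B1 := (beta mu a').
Local Notation B2 := (beta mu b').
Hypothesis HA : forall z, (in_beta lam z /\ ~ in_beta mu z) <-> z = A1 \/ z = A2.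
Hypothesis HB : forall z, (in_beta mu z /\ ~ in_beta lam z) <-> z = B1 \/ z = B2.

Lemma A2_lt_A1 : A2 < A1. Proof. exact: beta_ltn. Qed.
Lemma B2_lt_B1 : B2 < B1. Proof. exact: beta_ltn. Qed.

Lemma mem_diff_lam z : (in_beta lam z /\ ~ in_beta mu z) <-> z \in [:: A1; A2].
Proof. by rewrite mem_seq2 HA; split=> [[]->|/orP[]/eqP->]; rewrite ?eqxx ?orbT; auto. Qed.

Lemma mem_diff_mu z : (in_beta mu z /\ ~ in_beta lam z) <-> z \in [:: B1; B2].
Proof. by rewrite mem_seq2 HB; split=> [[]->|/orP[]/eqP->]; rewrite ?eqxx ?orbT; auto. Qed.

Lemma uniq_diff_lam : uniq [:: A1; A2].
Proof. by rewrite /= inE andbT; have := A2_lt_A1; rewrite lt_def eq_sym => /andP[]. Qed.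

Lemma uniq_diff_mu : uniq [:: B1; B2].
Proof. by rewrite /= inE andbT; have := B2_lt_B1; rewrite lt_def eq_sym => /andP[]. Qed.

Lemma beta_sum_exchange : A1 + A2 = B1 + B2.
Proof.
have := psize_exchange pl pm uniq_diff_lam uniq_diff_mu mem_diff_lam mem_diff_mu.
by rewrite !big_cons !big_nil hsz; lia.
Qed.

Lemma strip_data_lam_count p k j : (1 <= p)%N -> (1 <= j)%N ->
  ~ in_beta lam (beta mu j) -> beta mu j < beta lam p ->
  (k + count (fun z => beta mu j < z)%R [:: B1; B2] =
   j.-1 + count (fun z => beta mu j < z)%R [:: A1; A2])%N ->
  strip_data lam p k (beta mu j).
Proof.
move=> p1 j1 ny lt hk; have [q sd] := strip_data_exists pl p1 ny lt.
have := strip_index pl pm uniq_diff_lam uniq_diff_mu mem_diff_lam mem_diff_mu sd j1 erefl.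
by rewrite -hk => /addIn <-.
Qed.

Lemma strip_data_mu_count p k j : (1 <= p)%N -> (1 <= j)%N ->
  ~ in_beta mu (beta lam j) -> beta lam j < beta mu p ->
  (k + count (fun z => beta lam j < z)%R [:: A1; A2] =
   j.-1 + count (fun z => beta lam j < z)%R [:: B1; B2])%N ->
  strip_data mu p k (beta lam j).
Proof.
move=> p1 j1 ny lt hk; have [q sd] := strip_data_exists pm p1 ny lt.
have := strip_index pm pl uniq_diff_mu uniq_diff_lam mem_diff_mu mem_diff_lam sd j1 erefl.
by rewrite -hk => /addIn <-.
Qed.

Lemma A1_notin : ~ in_beta mu A1. Proof. by case: (proj2 (HA A1) (or_introl erefl)). Qed.
Lemma A2_notin : ~ in_beta mu A2. Proof. by case: (proj2 (HA A2) (or_intror erefl)). Qed.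
Lemma B2_notin : ~ in_beta lam B2. Proof. by case: (proj2 (HB B2) (or_intror erefl)). Qed.

Section CaseA1ltB1.
Hypothesis hAB : A1 < B1.

Lemma B2_lt_A2 : B2 < A2.
Proof. by have := beta_sum_exchange; lia. Qed.

Lemma strip_data_gamma1 : strip_data lam b b' B2.
Proof.
have b2a2 := B2_lt_A2; have a2a1 := A2_lt_A1; have b2b1 := B2_lt_B1.
apply: strip_data_lam_count; rewrite /= ?ltxx //; try lia; exact: B2_notin.
Qed.

Lemma strip_data_gamma1' : strip_data mu a' a A1.
Proof.
have b2a2 := B2_lt_A2; have a2a1 := A2_lt_A1; have b2b1 := B2_lt_B1.
apply: strip_data_mu_count; rewrite /= ?ltxx //; try lia; exact: A1_notin.
Qed.

Lemma strip_data_gamma2 : strip_data lam a b' B2.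
Proof.
have b2a2 := B2_lt_A2; have a2a1 := A2_lt_A1; have b2b1 := B2_lt_B1.
apply: strip_data_lam_count; rewrite /= ?ltxx //; try lia; exact: B2_notin.
Qed.

Lemma strip_data_gamma2' : strip_data mu a' b.-1 A2.
Proof.
have b2a2 := B2_lt_A2; have a2a1 := A2_lt_A1; have b2b1 := B2_lt_B1.
apply: strip_data_mu_count; rewrite /= ?ltxx //; try lia; exact: A2_notin.
Qed.

Lemma strip_rem_gamma1 : strip_rem lam b b' B2 = strip_rem mu a' a A1.
Proof.
apply/(strip_rem_eqP pl pm strip_data_gamma1 strip_data_gamma1')/bead_move_swap => //.
- by move=> z; rewrite HA or_comm.
- by move=> e; have := A2_lt_A1; rewrite e ltxx.
- by move=> e; have := B2_lt_B1; rewrite e ltxx.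
Qed.

Lemma strip_rem_gamma2 : strip_rem lam a b' B2 = strip_rem mu a' b.-1 A2.
Proof.
apply/(strip_rem_eqP pl pm strip_data_gamma2 strip_data_gamma2')/bead_move_swap => //.
- by move=> e; have := A2_lt_A1; rewrite e ltxx.
- by move=> e; have := B2_lt_B1; rewrite e ltxx.
Qed.

Lemma strip_pair_cases g g' : strip_pair lam mu g g' ->
  (g, g') = (strip lam b b' B2, strip mu a' a A1) \/
  (g, g') = (strip lam a b' B2, strip mu a' b.-1 A2).
Proof.
case=> s [/(border_strip_strip_data pl) [p [q [y [sd -> ->]]]]].
case/(border_strip_strip_data pm) => p' [q' [y' [sd' E ->]]].
have nA : A1 <> A2 by move=> e; have := A2_lt_A1; rewrite e ltxx.
have nB : B1 <> B2 by move=> e; have := B2_lt_B1; rewrite e ltxx.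
have [ex ey] := bead_move_common nA nB HA HB (proj1 (strip_rem_eqP pl pm sd sd') E).
have {ey} ey : y = B2.
  case: ey => // ey; have := strip_data_lt pl sd; have := A2_lt_A1.
  by rewrite ey; case: ex => ->; lia.
subst y; case: ex => /(beta_inj pl) ep; subst p.
  have eq := strip_data_uniq pl sd strip_data_gamma2; subst q.
  by right; rewrite /strip -E strip_rem_gamma2.
have eq := strip_data_uniq pl sd strip_data_gamma1; subst q.
by left; rewrite /strip -E strip_rem_gamma1.
Qed.

Lemma two_strip_pairs_lt : exists g1 g1' g2 g2', [/\ two_strip_pairs lam mu g1 g1' g2 g2',
  [/\ (#|` g1|)%:Z = B1 - A1, (#|` g1'|)%:Z = B1 - A1,
      (#|` g2|)%:Z = A1 - B2 & (#|` g2'|)%:Z = A1 - B2]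
  & [/\ (ht g1)%:Z = b'%:Z - b%:Z, (ht g1')%:Z = a%:Z - a'%:Z,
        (ht g2)%:Z = b'%:Z - a%:Z & (ht g2')%:Z = b%:Z - a'%:Z - 1]].
Proof.
have sd1 := strip_data_gamma1; have sd1' := strip_data_gamma1'.
have sd2 := strip_data_gamma2; have sd2' := strip_data_gamma2'.
exists (strip lam b b' B2), (strip mu a' a A1), (strip lam a b' B2), (strip mu a' b.-1 A2).
have sum := beta_sum_exchange; have a2a1 := A2_lt_A1.
split.
- split=> [[e _]|g g'|].
  + by have := card_strip pl sd1; rewrite e card_strip //; lia.
  + split; first exact: strip_pair_cases.
    case=> -[-> ->]; [exists (strip_rem lam b b' B2) | exists (strip_rem lam a b' B2)].
      by rewrite {2}strip_rem_gamma1; split; exact: strip_border_strip.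
    by rewrite {2}strip_rem_gamma2; split; exact: strip_border_strip.
  + by split; apply: strip_incl => //; rewrite ?(ltnW hab) //; exact: ltW.
- by rewrite !card_strip //; split; lia.
have [_ ? _ _] := sd1; have [_ ? _ _] := sd1'; have [_ ? _ _] := sd2; have [_ ? _ _] := sd2'.
by rewrite !ht_strip //; split; lia.
Qed.

End CaseA1ltB1.

End TwoMoves.

Lemma inS_diff_beta l m (a b : nat) :
  (forall x : rat, (inS l x /\ ~ inS m x) <->
     (x = (part l a)%:R - a%:R + 1 / 2 \/ x = (part l b)%:R - b%:R + 1 / 2))%R ->
  forall z, (in_beta l z /\ ~ in_beta m z) <-> z = beta l a \/ z = beta l b.
Proof.
move=> H z; have rat_beta j : ((part l j)%:R - j%:R + 1 / 2 = (beta l j)%:~R + 1 / 2 :> rat)%R.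
  by rewrite /beta rmorphB.
have half_inj (w : int) : (z%:~R + 1 / 2 = w%:~R + 1 / 2 :> rat)%R <-> z = w.
  by split=> [/addIr/eqP|->//]; rewrite eqr_int => /eqP.
rewrite -!in_beta_inS -!half_inj -!rat_beta; exact: H.
Qed.

Unset Implicit Arguments.

Theorem lemma7 (lam mu : seq nat) (a b a' b' : nat) :
  is_partition lam -> is_partition mu ->
  psize mu = psize lam ->
  hamming lam mu = 2%N ->
  (1 <= a)%N -> (a < b)%N -> (1 <= a')%N -> (a' < b')%N ->
  (forall x : rat, (inS lam x /\ ~ inS mu x) <->
     (x = (part lam a)%:R - a%:R + 1 / 2 \/ x = (part lam b)%:R - b%:R + 1 / 2)) ->
  (forall x : rat, (inS mu x /\ ~ inS lam x) <->
     (x = (part mu a')%:R - a'%:R + 1 / 2 \/ x = (part mu b')%:R - b'%:R + 1 / 2)) ->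
  exists g1 g1' g2 g2' : {fset cell},
    [/\ (g1, g1') <> (g2, g2'),
        (forall g g' : {fset cell},
           (exists s, border_strip_rem lam g s /\ border_strip_rem mu g' s) <->
           ((g, g') = (g1, g1') \/ (g, g') = (g2, g2'))),
        (* (i) *)
        (g1 `<=` g2)%fset /\ (g1' `<=` g2')%fset,
        (* (ii) *)
        [/\ (#|` g1|)%:Z = `|(part lam a)%:Z - a%:Z - (part mu a')%:Z + a'%:Z|,
            (#|` g1'|)%:Z = `|(part lam a)%:Z - a%:Z - (part mu a')%:Z + a'%:Z|,
            (#|` g2|)%:Z = `|(part lam a)%:Z - a%:Z - (part mu b')%:Z + b'%:Z|
          & (#|` g2'|)%:Z = `|(part lam a)%:Z - a%:Z - (part mu b')%:Z + b'%:Z|]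
      & (* (iii) *)
        ((part lam a)%:Z - a%:Z > (part mu a')%:Z - a'%:Z ->
           [/\ (ht g1)%:Z = a'%:Z - a%:Z, (ht g1')%:Z = b%:Z - b'%:Z,
               (ht g2)%:Z = b'%:Z - a%:Z - 1 & (ht g2')%:Z = b%:Z - a'%:Z]) /\
        ((part lam a)%:Z - a%:Z < (part mu a')%:Z - a'%:Z ->
           [/\ (ht g1)%:Z = b'%:Z - b%:Z, (ht g1')%:Z = a%:Z - a'%:Z,
               (ht g2)%:Z = b'%:Z - a%:Z & (ht g2')%:Z = b%:Z - a'%:Z - 1])].
Proof.
(* d(lam, mu) = 2 is not used: the descriptions of S_lam \ S_mu and S_mu \ S_lam
   suffice *)
move=> pl pm hsz _ ha hab ha' hab' /inS_diff_beta HA /inS_diff_beta HB.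
have sum := beta_sum_exchange pl pm hsz ha hab ha' hab' HA HB.
have [lt|gt] : beta lam a < beta mu a' \/ beta mu a' < beta lam a.
  have [_ nB1] := proj2 (HA (beta lam a)) (or_introl erefl).
  have [B1 _] := proj2 (HB (beta mu a')) (or_introl erefl).
  by case: (ltgtP (beta lam a) (beta mu a')) => [| |e]; [left|right|rewrite e in nB1].
- have [g1 [g1' [g2 [g2' [[D U I] [c1 c1' c2 c2'] [t1 t1' t2 t2']]]]]] :=
    two_strip_pairs_lt pl pm hsz ha hab ha' hab' HA HB lt.
  exists g1, g1', g2, g2'; split=> //; first by rewrite /beta in c1 c1' c2 c2' sum lt *; split; lia.
  by split=> hh; [move: hh lt; rewrite /beta; lia | split].
have [g1' [g1 [g2' [g2 [P [c1' c1 c2' c2] [t1' t1 t2' t2]]]]]] :=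
  two_strip_pairs_lt pm pl (esym hsz) ha' hab' ha hab HB HA gt.
have [D U I] := two_strip_pairs_sym P.
exists g1, g1', g2, g2'; split=> //; first by rewrite /beta in c1 c1' c2 c2' sum gt *; split; lia.
by split=> hh; [split | move: hh gt; rewrite /beta; lia].
Qed.
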